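(* Let $t_0,t_1$ be terms with $k\notin\mathrm{fv}(t_1)$ such that $(\lambda x.\mathcal Sk.t_0)\,t_1$ and $\mathcal Sk.((\lambda x.t_0)\,t_1)$ are closed. Then $(\lambda x.\mathcal Sk.t_0)\,t_1\approx^p_{\emptyset}\mathcal Sk.((\lambda x.t_0)\,t_1)$.
   Context: Terms of $\lambda_S$: $t ::= x \mid \lambda x.t \mid t\,t \mid \mathcal{S}k.t \mid \langle t\rangle$ (shift binds $k$; $\langle\cdot\rangle$ reset), up to $\alpha$-conversion; $\mathrm{fv}(t)$ free variables. Values $v::=\lambda x.t$. Pure contexts $E ::= \Box \mid v\,E \mid E\,t$; evaluation contexts $F ::= \Box \mid v\,F \mid F\,t \mid \langle F\rangle$. Reduction: $F[(\lambda x.t)v]\to F[t\{v/x\}]$; $F[\langle E[\mathcal Sk.t]\rangle]\to F[\langle t\{\lambda x.\langle E[x]\rangle/k\}\rangle]$ ($x\notin\mathrm{fv}(E)$); $F[\langle v\rangle]\to F[v]$; $\to^*$ reflexive-transitive closure. Program: term $\langle t\rangle$ (ranged over by $p$). Closures: for $R$ a relation on closed terms, $\widetilde R$ is the smallest relation containing $R$, all $(x,x)$, closed under all term constructors, restricted to closed terms; $\widehat R$ is the smallest relation on closed evaluation contexts with $\Box\widehat R\Box$, $v_0F_0\widehat Rv_1F_1$ if $F_0\widehat RF_1,v_0\widetilde Rv_1$; $F_0t_0\widehat RF_1t_1$ if $F_0\widehat RF_1,t_0\widetilde Rt_1$; $\langle F_0\rangle\widehat R\langle F_1\rangle$ if $F_0\widehat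 RF_1$. Environmental bisimilarity for programs: an environment $\mathcal E$ is a relation on closed values; an environmental relation $\mathcal X$ is a set of environments and triples $(\mathcal E,t_0,t_1)$, $t_0,t_1$ closed, written $t_0\mathcal X_{\mathcal E}t_1$. $\mathcal X$ is an environmental bisimulation for programs if (1) if $t_0\mathcal X_{\mathcal E}t_1$ and $t_0,t_1$ are not both programs, then for all pure $E_0\widehat{\mathcal E}E_1$, $\langle E_0[t_0]\rangle\mathcal X_{\mathcal E}\langle E_1[t_1]\rangle$; (2) if $p_0\mathcal X_{\mathcal E}p_1$: (a) $p_0\to p_0'$ (program) implies $p_1\to^*p_1'$ (program) with $p_0'\mathcal X_{\mathcal E}p_1'$; (b) $p_0\to v_0$ implies $p_1\to^*v_1$ and $\{(v_0,v_1)\}\cup\mathcal E\in\mathcal X$; (c) symmetric conditions; (3) for $\mathcal E\in\mathcal X$, $(\lambda x.t_0)\mathcal E(\lambda x.t_1)$ and $v_0\widetilde{\mathcal E}v_1$ imply $t_0\{v_0/x\}\mathcal X_{\mathcal E}t_1\{v_1/x\}$. $\approx^p$ is the largest such relation; $t_0\approx^p_{\emptyset}t_1$ means $(\emptyset,t_0,t_1)\in\approx^p$ (defined on closed terms only). *)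

(* lambda_S (call-by-value lambda calculus with shift/reset),
   represented with de Bruijn indices (terms up to alpha-conversion). *)
From Stdlib Require Import Arith.

(* t ::= x | \x.t | t t | S k.t | <t>   ; Lam and Shift bind index 0. *)
Inductive term : Type :=
| Var : nat -> term
| Lam : term -> term
| App : term -> term -> term
| Shift : term -> term
| Reset : term -> term.

Fixpoint lift (d c : nat) (t : term) : term :=
  match t with
  | Var n => if n <? c then Var n else Var (n + d)
  | Lam b => Lam (lift d (S c) b)
  | App a b => App (lift d c a) (lift d c b)
  | Shift b => Shift (lift d (S c) b)
  | Reset a => Reset (lift d c a)
  end.

Fixpoint subst (n : nat) (v : term) (t : term) : term :=
  match t with
  | Var m => if m <? n then Var m
             else if m =? n then lift n 0 v else Var (m - 1)
  | Lam b => Lam (subst (S n) v b)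
  | App a b => App (subst n v a) (subst n v b)
  | Shift b => Shift (subst (S n) v b)
  | Reset a => Reset (subst n v a)
  end.

(* swap the indices c and c+1 (used to exchange the order of two binders) *)
Fixpoint swap (c : nat) (t : term) : term :=
  match t with
  | Var m => if m =? c then Var (S c) else if m =? S c then Var c else Var m
  | Lam b => Lam (swap (S c) b)
  | App a b => App (swap c a) (swap c b)
  | Shift b => Shift (swap (S c) b)
  | Reset a => Reset (swap c a)
  end.

Fixpoint closed_at (n : nat) (t : term) : Prop :=
  match t with
  | Var m => m < n
  | Lam b => closed_at (S n) b
  | App a b => closed_at n a /\ closed_at n b
  | Shift b => closed_at (S n) b
  | Reset a => closed_at n a
  end.

Definition closed (t : term) : Prop := closed_at 0 t.

Definition is_value (t : term) : Prop :=
  match t with Lam _ => True | _ => False end.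

Definition is_program (t : term) : Prop :=
  match t with Reset _ => True | _ => False end.

Inductive ctx : Type :=
| Hole : ctx
| CAppR : term -> ctx -> ctx
| CAppL : ctx -> term -> ctx
| CRes : ctx -> ctx.

Fixpoint plug (F : ctx) (t : term) : term :=
  match F with
  | Hole => t
  | CAppR v F' => App v (plug F' t)
  | CAppL F' u => App (plug F' t) u
  | CRes F' => Reset (plug F' t)
  end.

Fixpoint lift_ctx (d c : nat) (F : ctx) : ctx :=
  match F with
  | Hole => Hole
  | CAppR v F' => CAppR (lift d c v) (lift_ctx d c F')
  | CAppL F' u => CAppL (lift_ctx d c F') (lift d c u)
  | CRes F' => CRes (lift_ctx d c F')
  end.

Fixpoint is_ectx (F : ctx) : Prop :=
  match F with
  | Hole => True
  | CAppR v F' => is_value v /\ is_ectx F'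
  | CAppL F' _ => is_ectx F'
  | CRes F' => is_ectx F'
  end.

Fixpoint is_pure (E : ctx) : Prop :=
  match E with
  | Hole => True
  | CAppR v E' => is_value v /\ is_pure E'
  | CAppL E' _ => is_pure E'
  | CRes _ => False
  end.

Fixpoint closed_ctx (F : ctx) : Prop :=
  match F with
  | Hole => True
  | CAppR v F' => closed v /\ closed_ctx F'
  | CAppL F' u => closed_ctx F' /\ closed u
  | CRes F' => closed_ctx F'
  end.

Inductive step : term -> term -> Prop :=
| step_beta : forall F b v, is_ectx F -> is_value v ->
    step (plug F (App (Lam b) v)) (plug F (subst 0 v b))
| step_shift : forall F E b, is_ectx F -> is_pure E ->
    step (plug F (Reset (plug E (Shift b))))
         (plug F (Reset (subst 0 (Lam (Reset (plug (lift_ctx 1 0 E) (Var 0)))) b)))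
| step_reset : forall F v, is_ectx F -> is_value v ->
    step (plug F (Reset v)) (plug F v).

Inductive steps : term -> term -> Prop :=
| steps_refl : forall t, steps t t
| steps_step : forall t u w, step t u -> steps u w -> steps t w.

Definition rel := term -> term -> Prop.

Inductive tilde_open (R : rel) : rel :=
| TO_R : forall a b, R a b -> tilde_open R a b
| TO_var : forall n, tilde_open R (Var n) (Var n)
| TO_lam : forall a b, tilde_open R a b -> tilde_open R (Lam a) (Lam b)
| TO_app : forall a a' b b', tilde_open R a b -> tilde_open R a' b' ->
    tilde_open R (App a a') (App b b')
| TO_shift : forall a b, tilde_open R a b -> tilde_open R (Shift a) (Shift b)
| TO_reset : forall a b, tilde_open R a b -> tilde_open R (Reset a) (Reset b).

Definition tilde (R : rel) : rel :=
  fun a b => tilde_open R a b /\ closed a /\ closed b.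

Inductive hat (R : rel) : ctx -> ctx -> Prop :=
| H_hole : hat R Hole Hole
| H_appR : forall v0 v1 F0 F1, hat R F0 F1 -> is_value v0 -> is_value v1 ->
    tilde R v0 v1 -> hat R (CAppR v0 F0) (CAppR v1 F1)
| H_appL : forall F0 F1 t0 t1, hat R F0 F1 -> tilde R t0 t1 ->
    hat R (CAppL F0 t0) (CAppL F1 t1)
| H_res : forall F0 F1, hat R F0 F1 -> hat R (CRes F0) (CRes F1).

Definition is_env (E : rel) : Prop :=
  forall a b, E a b -> is_value a /\ closed a /\ is_value b /\ closed b.

Definition empty_env : rel := fun _ _ => False.

Definition add_env (v0 v1 : term) (E : rel) : rel :=
  fun a b => (a = v0 /\ b = v1) \/ E a b.

Record envrel : Type := {
  X_env : rel -> Prop;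
  X_tri : rel -> term -> term -> Prop
}.

Definition env_bisim_p (X : envrel) : Prop :=
  (forall E, X_env X E -> is_env E) /\
  (forall E t0 t1, X_tri X E t0 t1 -> is_env E /\ closed t0 /\ closed t1) /\
  (forall E t0 t1, X_tri X E t0 t1 -> ~ (is_program t0 /\ is_program t1) ->
     forall E0 E1, is_pure E0 -> is_pure E1 -> hat E E0 E1 ->
       X_tri X E (Reset (plug E0 t0)) (Reset (plug E1 t1))) /\
  (forall E p0 p1, X_tri X E p0 p1 -> is_program p0 -> is_program p1 ->
     (forall p0', step p0 p0' -> is_program p0' ->
        exists p1', steps p1 p1' /\ is_program p1' /\ X_tri X E p0' p1') /\
     (forall v0, step p0 v0 -> is_value v0 ->
        exists v1, steps p1 v1 /\ is_value v1 /\ X_env X (add_env v0 v1 E)) /\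
     (forall p1', step p1 p1' -> is_program p1' ->
        exists p0', steps p0 p0' /\ is_program p0' /\ X_tri X E p0' p1') /\
     (forall v1, step p1 v1 -> is_value v1 ->
        exists v0, steps p0 v0 /\ is_value v0 /\ X_env X (add_env v0 v1 E))) /\
  (forall E b0 b1 v0 v1, X_env X E -> E (Lam b0) (Lam b1) ->
     is_value v0 -> is_value v1 -> tilde E v0 v1 ->
     X_tri X E (subst 0 v0 b0) (subst 0 v1 b1)).

(* t0 ~p_E t1 : the triple belongs to the largest bisimulation (= union of all) *)
Definition approx_p (E : rel) (t0 t1 : term) : Prop :=
  exists X, env_bisim_p X /\ X_tri X E t0 t1.

(* Put in a pure context E under a reset, the right-hand side fires its shift at
   once, capturing c = \y.<E[y]> and becoming <(\x.t0{c/k}) t1>.  The left-hand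
   side first evaluates t1 to a value v, then performs its beta-step and captures
   the same continuation, reaching t0{v/x}{c/k}, which is also what the right-hand
   beta-step produces.  The compatible closure of these intermediate
   configurations is stable under substitution of related closed values and under
   reduction, each step on one side being matched by at most two on the other;
   with the initial pairs added it is an environmental bisimulation. *)
From Stdlib Require Import Arith Lia.

Lemma closed_at_weaken t : forall n m, closed_at n t -> n <= m -> closed_at m t.
Proof.
  induction t; simpl; intros n' m Ht Hle; try tauto.
  - lia.
  - eapply IHt; eauto; lia.
  - destruct Ht; split; eauto.
  - eapply IHt; eauto; lia.
  - eauto.
Qed.

Lemma lift_closed_at t : forall d c, closed_at c t -> lift d c t = t.
Proof.
  induction t; simpl; intros d c Ht.
  - destruct (Nat.ltb_spec n c); [reflexivity | lia].
  - f_equal; auto.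
  - destruct Ht; f_equal; auto.
  - f_equal; auto.
  - f_equal; auto.
Qed.

Lemma subst_closed_at t : forall n v, closed_at n t -> subst n v t = t.
Proof.
  induction t; simpl; intros n' v Ht.
  - destruct (Nat.ltb_spec n n'); [reflexivity | lia].
  - f_equal; auto.
  - destruct Ht; f_equal; auto.
  - f_equal; auto.
  - f_equal; auto.
Qed.

Lemma swap_closed_at t : forall c, closed_at c t -> swap c t = t.
Proof.
  induction t; simpl; intros c Ht.
  - destruct (Nat.eqb_spec n c); [lia |].
    destruct (Nat.eqb_spec n (S c)); [lia | reflexivity].
  - f_equal; auto.
  - destruct Ht; f_equal; auto.
  - f_equal; auto.
  - f_equal; auto.
Qed.

Lemma lift_closed d c w : closed w -> lift d c w = w.
Proof. intro Hw; apply lift_closed_at, (closed_at_weaken _ 0); auto; lia. Qed.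

Lemma subst_closed n v w : closed w -> subst n v w = w.
Proof. intro Hw; apply subst_closed_at, (closed_at_weaken _ 0); auto; lia. Qed.

Lemma swap_closed c w : closed w -> swap c w = w.
Proof. intro Hw; apply swap_closed_at, (closed_at_weaken _ 0); auto; lia. Qed.

Ltac index_cases := repeat (simpl; match goal with
  | |- context [?a <? ?b] => destruct (Nat.ltb_spec a b)
  | |- context [?a =? ?b] => destruct (Nat.eqb_spec a b) end); simpl; try lia.

Ltac simpl_closed := repeat match goal with
  | H : closed ?w |- context [lift ?d ?c ?w] => rewrite (lift_closed d c w H)
  | H : closed ?w |- context [subst ?n ?v ?w] => rewrite (subst_closed n v w H)
  | H : closed ?w |- context [swap ?c ?w] => rewrite (swap_closed c w H)
  end; try reflexivity; try (f_equal; lia); try lia.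

Lemma closed_at_lift t : forall n d c, closed_at n t -> closed_at (n + d) (lift d c t).
Proof.
  induction t; simpl; intros n' d c Ht.
  - index_cases.
  - apply (IHt (S n')); auto.
  - destruct Ht; split; auto.
  - apply (IHt (S n')); auto.
  - auto.
Qed.

Lemma closed_at_subst t : forall n v, closed_at (S n) t -> closed v -> closed_at n (subst n v t).
Proof.
  induction t; simpl; intros n' v Ht Hv.
  - index_cases. rewrite lift_closed by auto. apply (closed_at_weaken _ 0); auto; lia.
  - auto.
  - destruct Ht; split; auto.
  - auto.
  - auto.
Qed.

Lemma subst_lift_comm t : forall i j k n w, closed w -> i <= j -> n = j + k ->
  subst n w (lift k i t) = lift k i (subst j w t).
Proof.
  induction t; simpl; intros.
  - index_cases; simpl_closed.
  - f_equal; apply IHt; auto; lia.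
  - f_equal; auto.
  - f_equal; apply IHt; auto; lia.
  - f_equal; auto.
Qed.

Lemma subst_subst_comm t : forall k n u w, closed w -> k <= n ->
  subst n w (subst k u t) = subst k (subst (n - k) w u) (subst (S n) w t).
Proof.
  induction t; simpl; intros.
  - index_cases; simpl_closed. apply subst_lift_comm; auto; lia.
  - f_equal. replace (n - k) with (S n - S k) by lia. apply IHt; auto; lia.
  - f_equal; auto.
  - f_equal. replace (n - k) with (S n - S k) by lia. apply IHt; auto; lia.
  - f_equal; auto.
Qed.

Lemma subst_swap_comm t : forall c n w, closed w -> S (S c) <= n ->
  subst n w (swap c t) = swap c (subst n w t).
Proof.
  induction t; simpl; intros.
  - index_cases; simpl_closed.
  - f_equal; apply IHt; auto; lia.
  - f_equal; auto.
  - f_equal; apply IHt; auto; lia.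
  - f_equal; auto.
Qed.

Lemma subst_swap_exchange t : forall n v w, closed v -> closed w ->
  subst n v (subst (S n) w (swap n t)) = subst n w (subst (S n) v t).
Proof.
  induction t; simpl; intros.
  - index_cases; simpl_closed.
  - f_equal; auto.
  - f_equal; auto.
  - f_equal; auto.
  - f_equal; auto.
Qed.

Lemma subst_lift_cancel t : forall n v, subst n v (lift 1 n t) = t.
Proof.
  induction t; simpl; intros.
  - index_cases; simpl_closed.
  - f_equal; auto.
  - f_equal; auto.
  - f_equal; auto.
  - f_equal; auto.
Qed.

Fixpoint ctx_comp (E F : ctx) : ctx :=
  match E with
  | Hole => F
  | CAppR v E' => CAppR v (ctx_comp E' F)
  | CAppL E' u => CAppL (ctx_comp E' F) u
  | CRes E' => CRes (ctx_comp E' F)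
  end.

Lemma plug_comp E F t : plug (ctx_comp E F) t = plug E (plug F t).
Proof. induction E; simpl; congruence. Qed.

Lemma ctx_comp_hole E : ctx_comp E Hole = E.
Proof. induction E; simpl; congruence. Qed.

Lemma is_ectx_comp E F : is_ectx E -> is_ectx F -> is_ectx (ctx_comp E F).
Proof. induction E; simpl; tauto. Qed.

Lemma is_pure_comp E F : is_pure E -> is_pure F -> is_pure (ctx_comp E F).
Proof. induction E; simpl; tauto. Qed.

Lemma is_pure_ectx E : is_pure E -> is_ectx E.
Proof. induction E; simpl; tauto. Qed.

Fixpoint subst_ctx (n : nat) (w : term) (E : ctx) : ctx :=
  match E with
  | Hole => Hole
  | CAppR v E' => CAppR (subst n w v) (subst_ctx n w E')
  | CAppL E' u => CAppL (subst_ctx n w E') (subst n w u)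
  | CRes E' => CRes (subst_ctx n w E')
  end.

Lemma subst_plug E n w t : subst n w (plug E t) = plug (subst_ctx n w E) (subst n w t).
Proof. induction E; simpl; congruence. Qed.

Lemma is_pure_subst_ctx E n w : is_pure E -> is_pure (subst_ctx n w E).
Proof.
  induction E; simpl; try tauto.
  intros [Hv HE]; split; auto. destruct t; simpl in *; tauto.
Qed.

Definition cont (E : ctx) : term := Lam (Reset (plug (lift_ctx 1 0 E) (Var 0))).

Lemma subst_cont E n w : closed w -> subst n w (cont E) = cont (subst_ctx n w E).
Proof.
  intro Hw. unfold cont; simpl. rewrite subst_plug. do 3 f_equal.
  induction E; simpl; f_equal; auto; apply subst_lift_comm; auto; lia.
Qed.

Lemma closed_at_plug_inv E n t : closed_at n (plug E t) -> closed_at n t.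
Proof. revert n t; induction E; simpl; intuition eauto. Qed.

Lemma lift_ctx_closed_at E n d t : closed_at n (plug E t) -> lift_ctx d n E = E.
Proof.
  revert n t; induction E; simpl; intros n' t' H; auto.
  - destruct H; f_equal; eauto using lift_closed_at.
  - destruct H; f_equal; eauto using lift_closed_at.
  - f_equal; eauto.
Qed.

Lemma closed_at_cont E n t : closed_at n (plug E t) -> closed_at n (cont E).
Proof.
  unfold cont; simpl. revert n t; induction E; simpl; intros n' t' H.
  - lia.
  - destruct H; split; eauto. rewrite <- Nat.add_1_r. apply closed_at_lift; auto.
  - destruct H; split; eauto. rewrite <- Nat.add_1_r. apply closed_at_lift; auto.
  - eauto.
Qed.

Lemma closed_cont E t : closed (plug E t) -> closed (cont E).
Proof. apply closed_at_cont. Qed.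

(* A syntax-directed presentation of [step], convenient for inversion. *)
Inductive red : term -> term -> Prop :=
| red_beta b v : is_value v -> red (App (Lam b) v) (subst 0 v b)
| red_appL a a' u : red a a' -> red (App a u) (App a' u)
| red_appR v a a' : is_value v -> red a a' -> red (App v a) (App v a')
| red_reset a a' : red a a' -> red (Reset a) (Reset a')
| red_reset_value v : is_value v -> red (Reset v) v
| red_shift E b : is_pure E -> red (Reset (plug E (Shift b))) (Reset (subst 0 (cont E) b)).

Lemma red_plug E a b : is_ectx E -> red a b -> red (plug E a) (plug E b).
Proof.
  revert a b; induction E; simpl; intros a b HE Hab; auto.
  - destruct HE; constructor; auto.
  - constructor; auto.
  - constructor; auto.
Qed.

Lemma step_plug K a b : is_ectx K -> step a b -> step (plug K a) (plug K b).
Proof.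
  intros HK Hs; inversion Hs; subst; rewrite <- !plug_comp.
  - apply step_beta; auto using is_ectx_comp.
  - apply step_shift; auto using is_ectx_comp.
  - apply step_reset; auto using is_ectx_comp.
Qed.

Lemma red_step a b : red a b -> step a b.
Proof.
  induction 1.
  - apply (step_beta Hole); simpl; auto.
  - apply (step_plug (CAppL Hole u)); simpl; auto.
  - apply (step_plug (CAppR v Hole)); simpl; auto.
  - apply (step_plug (CRes Hole)); simpl; auto.
  - apply (step_reset Hole); simpl; auto.
  - apply (step_shift Hole); simpl; auto.
Qed.

Lemma step_red a b : step a b -> red a b.
Proof.
  intro Hs; inversion Hs; subst; apply red_plug; auto.
  - apply red_beta; auto.
  - apply (red_shift E); auto.
  - apply red_reset_value; auto.
Qed.

Lemma steps_one a b : red a b -> steps a b.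
Proof. intro; econstructor; [apply red_step; eauto | constructor]. Qed.

Lemma steps_plug E a b : is_ectx E -> steps a b -> steps (plug E a) (plug E b).
Proof. intros HE; induction 1; econstructor; eauto using step_plug. Qed.

Lemma red_app_inv a u x : red (App a u) x ->
  (exists b, a = Lam b /\ is_value u /\ x = subst 0 u b) \/
  (exists a', red a a' /\ x = App a' u) \/
  (is_value a /\ exists u', red u u' /\ x = App a u').
Proof. intro H; inversion H; subst; eauto 10. Qed.

Lemma red_reset_inv a x : red (Reset a) x ->
  (exists a', red a a' /\ x = Reset a') \/ (is_value a /\ x = a) \/
  (exists E b, is_pure E /\ a = plug E (Shift b) /\ x = Reset (subst 0 (cont E) b)).
Proof. intro H; inversion H; subst; eauto 10. Qed.

Lemma value_irreducible v x : is_value v -> ~ red v x.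
Proof. destruct v; simpl; try tauto; intros _ H; inversion H. Qed.

Lemma is_value_plug E t : is_value (plug E t) -> is_value t.
Proof. destruct E; simpl; tauto. Qed.

Lemma plug_shift_not_value E b : ~ is_value (plug E (Shift b)).
Proof. intro H; apply is_value_plug in H; exact H. Qed.

Lemma plug_shift_irreducible E b x : is_pure E -> ~ red (plug E (Shift b)) x.
Proof.
  revert x; induction E; simpl; intros x HE Hs.
  - inversion Hs.
  - destruct HE as [Hv HE].
    apply red_app_inv in Hs as [[? [_ [Hv' _]]] | [[? [Ha _]] | [_ [? [Hu _]]]]].
    + exact (plug_shift_not_value _ _ Hv').
    + eapply value_irreducible; eauto.
    + exact (IHE _ HE Hu).
  - apply red_app_inv in Hs as [[? [Heq _]] | [[? [Ha _]] | [Hv _]]].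
    + apply (plug_shift_not_value E b); rewrite Heq; exact I.
    + exact (IHE _ HE Ha).
    + exact (plug_shift_not_value _ _ Hv).
  - destruct HE.
Qed.

Lemma plug_red_inv E X Y : is_pure E -> ~ is_value X -> red (plug E X) Y ->
  exists X', red X X' /\ Y = plug E X'.
Proof.
  revert X Y; induction E; simpl; intros X Y HE Hn Hs.
  - eauto.
  - destruct HE as [Hv HE].
    apply red_app_inv in Hs as [[? [_ [Hv' _]]] | [[? [Ha _]] | [_ [u' [Hu ->]]]]].
    + exfalso; apply Hn; eapply is_value_plug; eauto.
    + exfalso; eapply value_irreducible; eauto.
    + destruct (IHE X u' HE Hn Hu) as [X' [? ->]]; eauto.
  - apply red_app_inv in Hs as [[? [Heq _]] | [[a' [Ha ->]] | [Hv _]]].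
    + exfalso; apply Hn, (is_value_plug E); rewrite Heq; exact I.
    + destruct (IHE X a' HE Hn Ha) as [X' [? ->]]; eauto.
    + exfalso; apply Hn; eapply is_value_plug; eauto.
  - destruct HE.
Qed.

Lemma plug_shift_decomp E E2 X b : is_pure E -> is_pure E2 ->
  plug E X = plug E2 (Shift b) ->
  is_value X \/ exists E3, is_pure E3 /\ X = plug E3 (Shift b) /\ E2 = ctx_comp E E3.
Proof.
  revert E2 X; induction E; simpl; intros E2 X HE HE2 Heq.
  - eauto.
  - destruct HE as [Hv HE]. destruct E2; simpl in Heq, HE2; try discriminate.
    + injection Heq as <- Heq.
      destruct (IHE E2 X HE (proj2 HE2) Heq) as [| [E3 [? [? ->]]]]; eauto.
    + injection Heq as Heq _. subst. exfalso; eapply plug_shift_not_value; eauto.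
  - destruct E2; simpl in Heq, HE2; try discriminate.
    + injection Heq as Heq _. left. apply (is_value_plug E). rewrite Heq; tauto.
    + injection Heq as Heq <-.
      destruct (IHE E2 X HE HE2 Heq) as [| [E3 [? [? ->]]]]; eauto.
  - destruct HE.
Qed.

Lemma app_value_plug_shift L u E b : is_pure E -> App L u = plug E (Shift b) -> is_value L ->
  exists G, is_pure G /\ E = CAppR L G /\ u = plug G (Shift b).
Proof.
  destruct E; simpl; intros HE Heq Hv; try discriminate.
  - injection Heq as -> ->; destruct HE; eauto.
  - injection Heq as Heq ->. subst. exfalso; eapply plug_shift_not_value; eauto.
Qed.

Lemma red_shift_inv E b y : is_pure E -> red (Reset (plug E (Shift b))) y ->
  y = Reset (subst 0 (cont E) b).
Proof.
  intros HE Hs.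
  apply red_reset_inv in Hs as [[? [Ha _]] | [[Hv _] | [E2 [b2 [HE2 [Heq ->]]]]]].
  - exfalso; eapply plug_shift_irreducible; eauto.
  - exfalso; eapply plug_shift_not_value; eauto.
  - destruct (plug_shift_decomp E E2 (Shift b) b2 HE HE2 Heq) as [[] | [E3 [_ [Heq3 ->]]]].
    destruct E3; simpl in Heq3; try discriminate.
    injection Heq3 as ->. rewrite ctx_comp_hole. reflexivity.
Qed.

Lemma red_closed a b : red a b -> closed a -> closed b.
Proof.
  unfold closed; induction 1; simpl; intros Ha.
  - destruct Ha; apply closed_at_subst; auto.
  - destruct Ha; auto.
  - destruct Ha; auto.
  - auto.
  - auto.
  - apply closed_at_subst.
    + exact (closed_at_plug_inv E 0 (Shift b) Ha).
    + exact (closed_cont E _ Ha).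
Qed.

Lemma steps_closed a b : steps a b -> closed a -> closed b.
Proof. induction 1; eauto using red_closed, step_red. Qed.

(* The compatible closure of two families of pairs: the configurations reached
   once the right-hand shift has captured the pure context [E] (the captured
   continuation being represented, up to [Sim], by [C]), and those reached once
   the left-hand side has furthermore performed its beta-step on a value. *)
Inductive Sim : term -> term -> Prop :=
| Sim_var n : Sim (Var n) (Var n)
| Sim_lam a b : Sim a b -> Sim (Lam a) (Lam b)
| Sim_app a a' b b' : Sim a b -> Sim a' b' -> Sim (App a a') (App b b')
| Sim_shift a b : Sim a b -> Sim (Shift a) (Shift b)
| Sim_reset a b : Sim a b -> Sim (Reset a) (Reset b)
| Sim_captured E C A B u u' : is_pure E -> closed C -> Sim (cont E) C -> Sim A B -> Sim u u' ->
    Sim (Reset (plug E (App (Lam (Shift A)) u)))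
        (Reset (App (Lam (subst 1 C (swap 0 B))) u'))
| Sim_applied E C A B v v' : is_pure E -> closed C -> Sim (cont E) C -> Sim A B -> Sim v v' ->
    is_value v -> closed v ->
    Sim (Reset (plug E (Shift (subst 1 v A))))
        (Reset (App (Lam (subst 1 C (swap 0 B))) v')).

Lemma Sim_refl t : Sim t t.
Proof. induction t; constructor; auto. Qed.

Lemma Sim_value a b : Sim a b -> is_value a -> is_value b.
Proof. destruct 1; simpl; auto. Qed.

Lemma Sim_value_r a b : Sim a b -> is_value b -> is_value a.
Proof. destruct 1; simpl; auto. Qed.

Lemma Sim_program a b : Sim a b -> is_program a -> is_program b.
Proof. destruct 1; simpl; auto. Qed.

Lemma Sim_program_r a b : Sim a b -> is_program b -> is_program a.
Proof. destruct 1; simpl; auto. Qed.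

Lemma Sim_lam_inv a b : Sim (Lam a) b -> exists b', b = Lam b' /\ Sim a b'.
Proof. intro H; inversion H; subst; eauto. Qed.

Lemma Sim_lam_inv_r a b : Sim a (Lam b) -> exists a', a = Lam a' /\ Sim a' b.
Proof. intro H; inversion H; subst; eauto. Qed.

Inductive SimCtx : ctx -> ctx -> Prop :=
| SimCtx_hole : SimCtx Hole Hole
| SimCtx_appR v v' E E' : Sim v v' -> SimCtx E E' -> SimCtx (CAppR v E) (CAppR v' E')
| SimCtx_appL E E' t t' : SimCtx E E' -> Sim t t' -> SimCtx (CAppL E t) (CAppL E' t').

Lemma Sim_plug E E' t t' : SimCtx E E' -> Sim t t' -> Sim (plug E t) (plug E' t').
Proof. induction 1; simpl; intros; try constructor; auto. Qed.

Lemma Sim_cont E E' t t' : closed (plug E t) -> closed (plug E' t') -> SimCtx E E' ->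
  Sim (cont E) (cont E').
Proof.
  intros H H' HE; unfold cont.
  rewrite (lift_ctx_closed_at E 0 1 t H), (lift_ctx_closed_at E' 0 1 t' H').
  do 2 constructor. apply Sim_plug; auto; constructor.
Qed.

Lemma Sim_plug_shift E x b : is_pure E -> Sim (plug E (Shift x)) b ->
  exists E' y, b = plug E' (Shift y) /\ SimCtx E E' /\ Sim x y /\ is_pure E'.
Proof.
  revert b; induction E; simpl; intros b HE H; inversion H; subst; try tauto.
  - exists Hole; simpl; eauto 6 using SimCtx.
  - destruct HE as [Hv HE].
    destruct (IHE b' HE ltac:(assumption)) as [E' [y [-> [? [? ?]]]]].
    exists (CAppR b0 E'), y; simpl; eauto 7 using SimCtx, Sim_value.
  - destruct (IHE b0 HE ltac:(assumption)) as [E' [y [-> [? [? ?]]]]].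
    exists (CAppL E' b'), y; simpl; eauto 7 using SimCtx.
Qed.

Lemma Sim_plug_shift_r E' a y : is_pure E' -> Sim a (plug E' (Shift y)) ->
  exists E x, a = plug E (Shift x) /\ SimCtx E E' /\ Sim x y /\ is_pure E.
Proof.
  revert a; induction E'; simpl; intros a HE H; inversion H; subst; try tauto.
  - exists Hole; simpl; eauto 6 using SimCtx.
  - destruct HE as [Hv HE].
    destruct (IHE' a' HE ltac:(assumption)) as [E [x [-> [? [? ?]]]]].
    exists (CAppR a0 E), x; simpl; eauto 7 using SimCtx, Sim_value_r.
  - destruct (IHE' a0 HE ltac:(assumption)) as [E [x [-> [? [? ?]]]]].
    exists (CAppL E a'), x; simpl; eauto 7 using SimCtx.
Qed.

Lemma Sim_subst a b n w w' : Sim a b -> closed w -> closed w' -> Sim w w' ->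
  Sim (subst n w a) (subst n w' b).
Proof.
  intros Hab Cw Cw' Hw; revert n; induction Hab; intro k; simpl.
  - index_cases; rewrite ?lift_closed by auto; auto using Sim.
  - constructor; auto.
  - constructor; auto.
  - constructor; auto.
  - constructor; auto.
  - rewrite subst_plug; simpl.
    rewrite (subst_subst_comm (swap 0 B) 1 (S k)), subst_swap_comm by (auto; lia).
    replace (S k - 1) with k by lia. rewrite (subst_closed k w' C) by auto.
    apply Sim_captured; auto using is_pure_subst_ctx.
    specialize (IHHab1 k). rewrite subst_cont, subst_closed in IHHab1 by auto. exact IHHab1.
  - rewrite subst_plug; simpl.
    rewrite (subst_subst_comm (swap 0 B) 1 (S k)), (subst_subst_comm A 1 (S k)),
      subst_swap_comm by (auto; lia).
    replace (S k - 1) with k by lia.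
    rewrite (subst_closed k w' C), (subst_closed k w v) by auto.
    apply Sim_applied; auto using is_pure_subst_ctx.
    + specialize (IHHab1 k). rewrite subst_cont, subst_closed in IHHab1 by auto. exact IHHab1.
    + specialize (IHHab3 k). rewrite subst_closed in IHHab3 by auto. exact IHHab3.
Qed.

(* Both sides of the lemma substitute the argument for [x] and the continuation
   for [k]; they do so in opposite orders, which [swap] compensates. *)
Lemma Sim_subst_exchange E C A B v v' : closed v -> closed v' -> closed C -> closed (cont E) ->
  Sim A B -> Sim v v' -> Sim (cont E) C ->
  Sim (subst 0 (cont E) (subst 1 v A)) (subst 0 v' (subst 1 C (swap 0 B))).
Proof.
  intros. rewrite subst_swap_exchange by auto. apply Sim_subst; auto. apply Sim_subst; auto.
Qed.

Lemma Sim_capture_argument E C A B G G' x y :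
  is_pure E -> closed C -> Sim (cont E) C -> Sim A B -> SimCtx G G' -> Sim x y ->
  closed (plug E (App (Lam (Shift A)) (plug G (Shift x)))) ->
  closed (App (Lam (subst 1 C (swap 0 B))) (plug G' (Shift y))) ->
  Sim (Reset (subst 0 (cont (ctx_comp E (CAppR (Lam (Shift A)) G))) x))
      (Reset (subst 0 (cont (CAppR (Lam (subst 1 C (swap 0 B))) G')) y)).
Proof.
  intros HE HC HEC HAB HG Hxy Ca Cb.
  assert (Ca' : closed (plug (ctx_comp E (CAppR (Lam (Shift A)) G)) (Shift x)))
    by (rewrite plug_comp; exact Ca).
  assert (Cb' : closed (plug (CAppR (Lam (subst 1 C (swap 0 B))) G') (Shift y))) by exact Cb.
  constructor. apply Sim_subst; [exact Hxy | eapply closed_cont; eauto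
                                 | eapply closed_cont; eauto |].
  unfold cont. rewrite (lift_ctx_closed_at _ 0 1 _ Ca'), (lift_ctx_closed_at _ 0 1 _ Cb').
  rewrite plug_comp; simpl. constructor. apply Sim_captured; auto.
  apply Sim_plug; auto; constructor.
Qed.

Definition sim_steps (a b : term) : Prop :=
  (forall a', red a a' -> exists b', steps b b' /\ Sim a' b') /\
  (forall b', red b b' -> exists a', steps a a' /\ Sim a' b').

Lemma sim_steps_app a a' b b' : Sim a b -> Sim a' b' -> closed a' -> closed b' ->
  sim_steps a b -> sim_steps a' b' -> sim_steps (App a a') (App b b').
Proof.
  intros Hab Hab' Ca' Cb' [IH1 IH2] [IH1' IH2']; split; intros x Hx;
    apply red_app_inv in Hx as [[c [-> [Hv ->]]] | [[a1 [Hs ->]] | [Hv [u1 [Hs ->]]]]].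
  - destruct (Sim_lam_inv _ _ Hab) as [d [-> Hd]].
    exists (subst 0 b' d); split.
    + apply steps_one, red_beta. eapply Sim_value; eauto.
    + apply Sim_subst; auto.
  - destruct (IH1 a1 Hs) as [b1 [? ?]].
    exists (App b1 b'); split; [apply (steps_plug (CAppL Hole b')) | constructor]; simpl; auto.
  - destruct (IH1' u1 Hs) as [b1 [? ?]].
    exists (App b b1); split; [apply (steps_plug (CAppR b Hole)) | constructor]; simpl; auto.
    split; auto. eapply Sim_value; eauto.
  - destruct (Sim_lam_inv_r _ _ Hab) as [d [-> Hd]].
    exists (subst 0 a' d); split.
    + apply steps_one, red_beta. eapply Sim_value_r; eauto.
    + apply Sim_subst; auto.
  - destruct (IH2 a1 Hs) as [b1 [? ?]].
    exists (App b1 a'); split; [apply (steps_plug (CAppL Hole a')) | constructor]; simpl; auto.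
  - destruct (IH2' u1 Hs) as [b1 [? ?]].
    exists (App a b1); split; [apply (steps_plug (CAppR a Hole)) | constructor]; simpl; auto.
    split; auto. eapply Sim_value_r; eauto.
Qed.

Lemma sim_steps_reset a b : Sim a b -> closed a -> closed b ->
  sim_steps a b -> sim_steps (Reset a) (Reset b).
Proof.
  intros Hab Ca Cb [IH1 IH2]; split; intros x Hx;
    apply red_reset_inv in Hx as [[a1 [Hs ->]] | [[Hv ->] | [E [y [HE [-> ->]]]]]].
  - destruct (IH1 a1 Hs) as [b1 [? ?]].
    exists (Reset b1); split; [apply (steps_plug (CRes Hole)) | constructor]; simpl; auto.
  - exists b; split; auto. apply steps_one, red_reset_value. eapply Sim_value; eauto.
  - destruct (Sim_plug_shift E y b HE Hab) as [E' [y' [-> [? [? ?]]]]].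
    exists (Reset (subst 0 (cont E') y')); split.
    + apply steps_one, red_shift; auto.
    + constructor. apply Sim_subst; eauto using Sim_cont, closed_cont.
  - destruct (IH2 a1 Hs) as [b1 [? ?]].
    exists (Reset b1); split; [apply (steps_plug (CRes Hole)) | constructor]; simpl; auto.
  - exists a; split; auto. apply steps_one, red_reset_value. eapply Sim_value_r; eauto.
  - destruct (Sim_plug_shift_r E a y HE Hab) as [E' [y' [-> [? [? ?]]]]].
    exists (Reset (subst 0 (cont E') y')); split.
    + apply steps_one, red_shift; auto.
    + constructor. apply Sim_subst; eauto using Sim_cont, closed_cont.
Qed.

Section Captured.

Variables (E : ctx) (C A B u u' : term).
Hypotheses (HE : is_pure E) (HC : closed C) (HEC : Sim (cont E) C) (HAB : Sim A B)
  (Huu : Sim u u') (IHu : sim_steps u u').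
Hypotheses (Ca : closed (Reset (plug E (App (Lam (Shift A)) u))))
  (Cb : closed (Reset (App (Lam (subst 1 C (swap 0 B))) u'))).

Let Cu : closed u := proj2 (closed_at_plug_inv E 0 _ Ca).
Let Cu' : closed u' := proj2 Cb.
Let CE : closed (cont E) := closed_cont E _ Ca.

Lemma sim_steps_captured_l a' : red (Reset (plug E (App (Lam (Shift A)) u))) a' ->
  exists b', steps (Reset (App (Lam (subst 1 C (swap 0 B))) u')) b' /\ Sim a' b'.
Proof.
  intro Hx; apply red_reset_inv in Hx as [[a1 [Hs ->]] | [[Hv _] | [E2 [x [HE2 [Heq ->]]]]]].
  - destruct (plug_red_inv E (App (Lam (Shift A)) u) _ HE (fun H => H) Hs) as [X [HX ->]]; clear Hs.
    apply red_app_inv in HX as [[c [[= <-] [Hv ->]]] | [[? [Hs _]] | [_ [u1 [Hs ->]]]]].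
    + eexists; split; [constructor |]. apply Sim_applied; auto.
    + exfalso; eapply value_irreducible; [| eauto]; exact I.
    + destruct (proj1 IHu u1 Hs) as [b1 [? ?]].
      exists (Reset (App (Lam (subst 1 C (swap 0 B))) b1)); split.
      * apply (steps_plug (CRes (CAppR _ Hole))); simpl; auto.
      * apply Sim_captured; auto.
  - exfalso; exact (is_value_plug _ _ Hv).
  - destruct (plug_shift_decomp E E2 _ x HE HE2 Heq) as [[] | [E3 [HE3 [Heq3 ->]]]].
    destruct (app_value_plug_shift _ _ _ _ HE3 Heq3 I) as [G [HG [-> ->]]].
    destruct (Sim_plug_shift G x u' HG Huu) as [G' [y [-> [? [? ?]]]]].
    exists (Reset (subst 0 (cont (CAppR (Lam (subst 1 C (swap 0 B))) G')) y)); split.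
    + apply steps_one, (red_shift (CAppR _ G')); simpl; auto.
    + apply Sim_capture_argument; auto; exact (closed_at_plug_inv (CRes Hole) 0 _ _).
Qed.

Lemma sim_steps_captured_r b' : red (Reset (App (Lam (subst 1 C (swap 0 B))) u')) b' ->
  exists a', steps (Reset (plug E (App (Lam (Shift A)) u))) a' /\ Sim a' b'.
Proof.
  intro Hx; apply red_reset_inv in Hx as [[b1 [Hs ->]] | [[[] _] | [E2 [y [HE2 [Heq ->]]]]]].
  - apply red_app_inv in Hs as [[c [[= <-] [Hv ->]]] | [[? [Hs _]] | [_ [u1 [Hs ->]]]]].
    + assert (Hvu : is_value u) by (eapply Sim_value_r; eauto).
      exists (Reset (subst 0 (cont E) (subst 1 u A))); split.
      * eapply steps_step.
        { apply red_step, red_reset, red_plug, (red_beta (Shift A)); auto using is_pure_ectx. }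
        apply steps_one, red_shift; auto.
      * constructor. apply Sim_subst_exchange; auto.
    + exfalso; eapply value_irreducible; [| eauto]; exact I.
    + destruct (proj2 IHu u1 Hs) as [a1 [? ?]].
      exists (Reset (plug E (App (Lam (Shift A)) a1))); split.
      * pose proof (steps_plug (ctx_comp (CRes E) (CAppR (Lam (Shift A)) Hole)) u a1) as Hsteps.
        rewrite !plug_comp in Hsteps; apply Hsteps; auto.
        apply is_ectx_comp; simpl; auto using is_pure_ectx.
      * apply Sim_captured; auto.
  - destruct (app_value_plug_shift _ _ _ _ HE2 Heq I) as [G' [HG' [-> ->]]].
    destruct (Sim_plug_shift_r G' u y HG' Huu) as [G [x [-> [? [? ?]]]]].
    exists (Reset (subst 0 (cont (ctx_comp E (CAppR (Lam (Shift A)) G))) x)); split.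
    + apply steps_one.
      pose proof (red_shift (ctx_comp E (CAppR (Lam (Shift A)) G)) x) as Hred.
      rewrite plug_comp in Hred; apply Hred, is_pure_comp; simpl; auto.
    + apply Sim_capture_argument; auto; exact (closed_at_plug_inv (CRes Hole) 0 _ _).
Qed.

End Captured.

Section Applied.

Variables (E : ctx) (C A B v v' : term).
Hypotheses (HE : is_pure E) (HC : closed C) (HEC : Sim (cont E) C) (HAB : Sim A B)
  (Hvv : Sim v v') (Hv : is_value v) (Cv : closed v).
Hypotheses (Ca : closed (Reset (plug E (Shift (subst 1 v A)))))
  (Cb : closed (Reset (App (Lam (subst 1 C (swap 0 B))) v'))).

Let Cv' : closed v' := proj2 Cb.
Let CE : closed (cont E) := closed_cont E _ Ca.

Lemma sim_steps_applied_l a' : red (Reset (plug E (Shift (subst 1 v A)))) a' ->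
  exists b', steps (Reset (App (Lam (subst 1 C (swap 0 B))) v')) b' /\ Sim a' b'.
Proof.
  intro Hx; apply red_shift_inv in Hx as ->; auto.
  exists (Reset (subst 0 v' (subst 1 C (swap 0 B)))); split.
  - apply steps_one, red_reset, red_beta. eapply Sim_value; eauto.
  - constructor. apply Sim_subst_exchange; auto.
Qed.

Lemma sim_steps_applied_r b' : red (Reset (App (Lam (subst 1 C (swap 0 B))) v')) b' ->
  exists a', steps (Reset (plug E (Shift (subst 1 v A)))) a' /\ Sim a' b'.
Proof.
  assert (Hv' : is_value v') by (eapply Sim_value; eauto).
  intro Hx; apply red_reset_inv in Hx as [[b1 [Hs ->]] | [[[] _] | [E2 [y [HE2 [Heq ->]]]]]].
  - apply red_app_inv in Hs as [[c [[= <-] [_ ->]]] | [[? [Hs _]] | [_ [u1 [Hs ->]]]]].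
    + exists (Reset (subst 0 (cont E) (subst 1 v A))); split.
      * apply steps_one, red_shift; auto.
      * constructor. apply Sim_subst_exchange; auto.
    + exfalso; eapply value_irreducible; [| eauto]; exact I.
    + exfalso; eapply value_irreducible; eauto.
  - destruct (app_value_plug_shift _ _ _ _ HE2 Heq I) as [G [_ [-> ->]]].
    exfalso; exact (plug_shift_not_value _ _ Hv').
Qed.

End Applied.

Lemma Sim_sim_steps a b : Sim a b -> closed a -> closed b -> sim_steps a b.
Proof.
  intro Hab; induction Hab; intros Ca Cb.
  - split; intros x Hx; inversion Hx.
  - split; intros x Hx; inversion Hx.
  - destruct Ca, Cb. apply sim_steps_app; auto.
  - split; intros x Hx; inversion Hx.
  - apply sim_steps_reset; auto.
  - assert (IHu : sim_steps u u')
      by (apply IHHab3; [exact (proj2 (closed_at_plug_inv E 0 _ Ca)) | exact (proj2 Cb)]).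
    split; [apply sim_steps_captured_l | apply sim_steps_captured_r]; auto.
  - split; [apply sim_steps_applied_l | apply sim_steps_applied_r]; auto.
Qed.

Lemma Sim_step_l p0 p1 p0' : Sim p0 p1 -> closed p0 -> closed p1 -> step p0 p0' ->
  exists p1', steps p1 p1' /\ Sim p0' p1' /\ closed p0' /\ closed p1'.
Proof.
  intros H C0 C1 Hs. apply step_red in Hs.
  destruct (proj1 (Sim_sim_steps _ _ H C0 C1) _ Hs) as [p1' [? ?]].
  exists p1'; eauto 6 using red_closed, steps_closed.
Qed.

Lemma Sim_step_r p0 p1 p1' : Sim p0 p1 -> closed p0 -> closed p1 -> step p1 p1' ->
  exists p0', steps p0 p0' /\ Sim p0' p1' /\ closed p0' /\ closed p1'.
Proof.
  intros H C0 C1 Hs. apply step_red in Hs.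
  destruct (proj2 (Sim_sim_steps _ _ H C0 C1) _ Hs) as [p0' [? ?]].
  exists p0'; eauto 6 using red_closed, steps_closed.
Qed.

Definition lam_shift (t0 t1 : term) : term := App (Lam (Shift t0)) t1.
Definition shift_lam (t0 t1 : term) : term := Shift (App (Lam (swap 0 t0)) (lift 1 0 t1)).

Lemma shift_lam_red E t0 t1 y : is_pure E ->
  red (Reset (plug E (shift_lam t0 t1))) y <->
  y = Reset (App (Lam (subst 1 (cont E) (swap 0 t0))) t1).
Proof.
  intro HE. pose proof (red_shift E (App (Lam (swap 0 t0)) (lift 1 0 t1)) HE) as Hred.
  simpl in Hred; rewrite subst_lift_cancel in Hred.
  split; [intro Hy; apply red_shift_inv in Hy; auto; subst | intros ->]; auto.
  simpl; rewrite subst_lift_cancel; reflexivity.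
Qed.

Definition sim_env (E : rel) : Prop := is_env E /\ forall a b, E a b -> Sim a b.

(* The initial pair only occurs with the empty environment, where [hat] forces
   both sides to be put in the same context. *)
Definition sim_tri (t0 t1 : term) (E : rel) (a b : term) : Prop :=
  sim_env E /\ closed a /\ closed b /\
  (Sim a b \/
   (exists E0, is_pure E0 /\ a = Reset (plug E0 (lam_shift t0 t1)) /\
                             b = Reset (plug E0 (shift_lam t0 t1))) \/
   ((forall x y, ~ E x y) /\ a = lam_shift t0 t1 /\ b = shift_lam t0 t1)).

Definition program_clause (Xenv : rel -> Prop) (Xtri : rel -> term -> term -> Prop)
    (E : rel) (p0 p1 : term) : Prop :=
  (forall p0', step p0 p0' -> is_program p0' ->
     exists p1', steps p1 p1' /\ is_program p1' /\ Xtri E p0' p1') /\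
  (forall v0, step p0 v0 -> is_value v0 ->
     exists v1, steps p1 v1 /\ is_value v1 /\ Xenv (add_env v0 v1 E)) /\
  (forall p1', step p1 p1' -> is_program p1' ->
     exists p0', steps p0 p0' /\ is_program p0' /\ Xtri E p0' p1') /\
  (forall v1, step p1 v1 -> is_value v1 ->
     exists v0, steps p0 v0 /\ is_value v0 /\ Xenv (add_env v0 v1 E)).

Lemma sim_env_add E v0 v1 : sim_env E -> closed v0 -> closed v1 -> Sim v0 v1 -> is_value v0 ->
  sim_env (add_env v0 v1 E).
Proof.
  intros [HE HS] C0 C1 H Hv0.
  assert (is_value v1) by (eapply Sim_value; eauto).
  split; intros a b [[-> ->] | Hab]; auto.
Qed.

Lemma program_clause_Sim t0 t1 E p0 p1 : sim_env E -> closed p0 -> closed p1 -> Sim p0 p1 ->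
  program_clause sim_env (sim_tri t0 t1) E p0 p1.
Proof.
  intros HE C0 C1 H; split; [| split; [| split]].
  - intros p0' Hs Hp. destruct (Sim_step_l _ _ _ H C0 C1 Hs) as [p1' [? [? [? ?]]]].
    exists p1'; split; [| split; [eapply Sim_program | unfold sim_tri]]; eauto; tauto.
  - intros v0 Hs Hv. destruct (Sim_step_l _ _ _ H C0 C1 Hs) as [v1 [? [? [? ?]]]].
    exists v1; eauto using Sim_value, sim_env_add.
  - intros p1' Hs Hp. destruct (Sim_step_r _ _ _ H C0 C1 Hs) as [p0' [? [? [? ?]]]].
    exists p0'; split; [| split; [eapply Sim_program_r | unfold sim_tri]]; eauto; tauto.
  - intros v1 Hs Hv. destruct (Sim_step_r _ _ _ H C0 C1 Hs) as [v0 [? [? [? ?]]]].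
    exists v0; eauto 6 using Sim_value_r, sim_env_add.
Qed.

Lemma program_clause_initial t0 t1 E E0 : sim_env E -> is_pure E0 ->
  closed (Reset (plug E0 (lam_shift t0 t1))) -> closed (Reset (plug E0 (shift_lam t0 t1))) ->
  program_clause sim_env (sim_tri t0 t1) E
    (Reset (plug E0 (lam_shift t0 t1))) (Reset (plug E0 (shift_lam t0 t1))).
Proof.
  intros HE HE0 C0 C1.
  set (q := Reset (App (Lam (subst 1 (cont E0) (swap 0 t0))) t1)).
  assert (Hq : forall y, red (Reset (plug E0 (shift_lam t0 t1))) y <-> y = q)
    by (intro; apply shift_lam_red; auto).
  assert (HSq : Sim (Reset (plug E0 (lam_shift t0 t1))) q).
  { apply Sim_captured; auto using Sim_refl. exact (closed_cont _ _ C0). }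
  assert (Cq : closed q) by (eapply red_closed; [apply Hq |]; eauto).
  destruct (program_clause_Sim t0 t1 _ _ _ HE C0 Cq HSq) as [Hprog [Hval _]].
  split; [| split; [| split]].
  - intros p0' Hs Hp. destruct (Hprog p0' Hs Hp) as [p1' [? ?]].
    exists p1'; split; auto. econstructor; [apply red_step, Hq |]; eauto.
  - intros v0 Hs Hv. destruct (Hval v0 Hs Hv) as [v1 [? ?]].
    exists v1; split; auto. econstructor; [apply red_step, Hq |]; eauto.
  - intros p1' Hs _. apply step_red, Hq in Hs as ->.
    exists (Reset (plug E0 (lam_shift t0 t1))); split; [constructor |].
    split; [exact I | unfold sim_tri; tauto].
  - intros v1 Hs Hv. apply step_red, Hq in Hs as ->. destruct Hv.
Qed.

Lemma tilde_open_Sim (E : rel) a b : (forall x y, E x y -> Sim x y) -> tilde_open E a b -> Sim a b.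
Proof. intros HE; induction 1; try constructor; auto. Qed.

Lemma tilde_open_empty (E : rel) a b : (forall x y, ~ E x y) -> tilde_open E a b -> a = b.
Proof. intros HE; induction 1; subst; auto. exfalso; eapply HE; eauto. Qed.

Lemma hat_Sim_plug (E : rel) E0 E1 t t' : (forall x y, E x y -> Sim x y) -> hat E E0 E1 ->
  Sim t t' -> Sim (plug E0 t) (plug E1 t').
Proof.
  intros HE; induction 1; simpl; intros; auto.
  - constructor; auto. destruct H2; eapply tilde_open_Sim; eauto.
  - constructor; auto. destruct H0; eapply tilde_open_Sim; eauto.
  - constructor; auto.
Qed.

Lemma hat_closed_plug (E : rel) E0 E1 t t' : hat E E0 E1 -> closed t -> closed t' ->
  closed (plug E0 t) /\ closed (plug E1 t').
Proof.
  unfold closed; induction 1; simpl; intros; auto.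
  - destruct H2 as [_ [? ?]]. destruct IHhat; auto.
  - destruct H0 as [_ [? ?]]. destruct IHhat; auto.
Qed.

Lemma hat_empty (E : rel) E0 E1 : (forall x y, ~ E x y) -> hat E E0 E1 -> E0 = E1.
Proof.
  intros HE; induction 1; f_equal; auto.
  - destruct H2; eapply tilde_open_empty; eauto.
  - destruct H0; eapply tilde_open_empty; eauto.
Qed.

Lemma sim_tri_pure_ctx t0 t1 E a b E0 E1 : sim_tri t0 t1 E a b ->
  ~ (is_program a /\ is_program b) -> is_pure E0 -> hat E E0 E1 ->
  sim_tri t0 t1 E (Reset (plug E0 a)) (Reset (plug E1 b)).
Proof.
  intros [HE [Ca [Cb Hab]]] Hnp HE0 Hh.
  destruct (hat_closed_plug _ _ _ _ _ Hh Ca Cb) as [C0 C1].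
  split; [exact HE | split; [exact C0 | split; [exact C1 |]]].
  destruct Hab as [Hab | [[? [_ [-> ->]]] | [Hempty [-> ->]]]].
  - left. constructor. apply (hat_Sim_plug E); auto. apply HE.
  - exfalso; apply Hnp; split; exact I.
  - right; left. apply (hat_empty _ _ _ Hempty) in Hh as <-. eauto.
Qed.

Lemma sim_tri_program_clause t0 t1 E p0 p1 : sim_tri t0 t1 E p0 p1 -> is_program p0 ->
  program_clause sim_env (sim_tri t0 t1) E p0 p1.
Proof.
  intros [HE [C0 [C1 Hp]]] Hp0.
  destruct Hp as [Hp | [[E0 [HE0 [-> ->]]] | [_ [-> _]]]].
  - apply program_clause_Sim; auto.
  - apply program_clause_initial; auto.
  - destruct Hp0.
Qed.

Lemma sim_tri_subst t0 t1 E b0 b1 v0 v1 : sim_env E -> E (Lam b0) (Lam b1) ->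
  tilde E v0 v1 -> sim_tri t0 t1 E (subst 0 v0 b0) (subst 0 v1 b1).
Proof.
  intros [HE HS] Hb [Hv [Cv0 Cv1]].
  destruct (HE _ _ Hb) as [_ [Cb0 [_ Cb1]]].
  apply HS in Hb; inversion Hb; subst.
  split; [split; auto |].
  split; [apply closed_at_subst; auto | split; [apply closed_at_subst; auto |]].
  left. apply Sim_subst; auto. eapply tilde_open_Sim; eauto.
Qed.

Theorem lemma20 (t0 t1 : term) :
  closed (App (Lam (Shift t0)) t1) ->
  closed (Shift (App (Lam (swap 0 t0)) (lift 1 0 t1))) ->
  approx_p empty_env (App (Lam (Shift t0)) t1)
                     (Shift (App (Lam (swap 0 t0)) (lift 1 0 t1))).
Proof.
  intros C0 C1.
  exists {| X_env := sim_env; X_tri := sim_tri t0 t1 |}; simpl.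
  split; [split; [| split; [| split; [| split]]] |].
  - intros E [HE _]; exact HE.
  - intros E a b [[HE _] [Ca [Cb _]]]; auto.
  - intros; apply sim_tri_pure_ctx; auto.
  - intros; apply sim_tri_program_clause; auto.
  - intros; apply sim_tri_subst; auto.
  - split; [split; intros a b [] |]. split; [exact C0 | split; [exact C1 |]].
    right; right. split; [intros x y [] | split; reflexivity].
Qed.
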